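(* Let $A,B,X\in T^1(\Sigma)$. Then $AX=BX$ if and only if $AX^+=BX^+$; and $XA=XB$ if and only if $X^*A=X^*B$ (all operations pruned).
   Context: Let $\Sigma$ be a set. A $\Sigma$-tree is a finite directed graph whose underlying undirected graph is a tree, edges labelled by elements of $\Sigma$, with distinguished start and end vertices such that there is a (possibly empty) directed path from start to end vertex. A morphism $X\to Y$ maps vertices to vertices and edges to edges, preserving initial vertex, terminal vertex and label of each edge, and mapping start/end vertex to start/end vertex; isomorphisms are morphisms bijective on vertices and edges. A retraction is an idempotent morphism $X\to X$, its image a retract; $X$ is pruned if it admits no non-identity retraction. Every tree $X$ has a pruned retract, unique up to isomorphism, whose isomorphism type is $\overline{X}$. $T^1(\Sigma)$ is the set of isomorphism types of pruned $\Sigma$-trees. Unpruned operations: $X\times Y$ identifies the end vertex of (a copy of) $X$ with the start vertex of (a disjoint copy of) $Y$, start vertex that of $X$, end vertex that of $Y$; $X^{(+)}$ is $X$ with end vertex moved to the start vertex; $X^{( * )}$ is $X$ with start vertex moved to the end vertex. Pruned operations: $XY=\overline{X\times Y}$, $X^+=\overline{X^{(+)}}$, $X^*=\overline{X^{( * )}}$. *)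

From Stdlib Require Import Relation_Operators.
From mathcomp Require Import all_boot.
Set Implicit Arguments. Unset Strict Implicit. Unset Printing Implicit Defensive.

Section Trees.
Variable S : Type.

Record tree := Tree {
  tV : finType;
  tE : finType;
  tsrc : tE -> tV;
  ttgt : tE -> tV;
  tlab : tE -> S;
  tstart : tV;
  tend : tV }.

Definition uadj (X : tree) (u v : tV X) : Prop :=
  exists e, (tsrc e = u /\ ttgt e = v) \/ (tsrc e = v /\ ttgt e = u).
Definition dadj (X : tree) (u v : tV X) : Prop :=
  exists e, tsrc e = u /\ ttgt e = v.

(* X is a Sigma-tree: underlying undirected (multi)graph is connected with
   |E| = |V| - 1 (i.e. a tree), and there is a directed path start -> end. *)
Definition is_tree (X : tree) : Prop :=
  [/\ #|tE X|.+1 = #|tV X|,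
      (forall v, @clos_refl_trans _ (@uadj X) (tstart X) v)
    & @clos_refl_trans _ (@dadj X) (tstart X) (tend X)].

Record hom (X Y : tree) := Hom {
  hv : tV X -> tV Y;
  he : tE X -> tE Y;
  hom_src : forall e, tsrc (he e) = hv (tsrc e);
  hom_tgt : forall e, ttgt (he e) = hv (ttgt e);
  hom_lab : forall e, tlab (he e) = tlab e;
  hom_start : hv (tstart X) = tstart Y;
  hom_end : hv (tend X) = tend Y }.

Definition is_iso (X Y : tree) (f : hom X Y) : Prop :=
  bijective (hv f) /\ bijective (he f).

Definition iso (X Y : tree) : Prop := exists f : hom X Y, is_iso f.

(* retraction = idempotent endomorphism *)
Definition idempotent (X : tree) (f : hom X X) : Prop :=
  (forall v, hv f (hv f v) = hv f v) /\ (forall e, he f (he f e) = he f e).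

Definition pruned (X : tree) : Prop :=
  forall f : hom X X, idempotent f ->
    (forall v, hv f v = v) /\ (forall e, he f e = e).

(* R is (isomorphic to) a retract of X: there are i : R -> X and r : X -> R
   with r o i = id; then i o r is a retraction of X with image iso to R. *)
Definition retract (R X : tree) : Prop :=
  exists (i : hom R X) (r : hom X R),
    (forall v, hv r (hv i v) = v) /\ (forall e, he r (he i e) = e).

(* equality of the pruned isomorphism types  overline(X) = overline(Y) *)
Definition core_eq (X Y : tree) : Prop :=
  exists P Q : tree, [/\ pruned P, retract P X, pruned Q, retract Q Y & iso P Q].

Definition embY (X Y : tree) (w : tV Y) : (tV X + {w : tV Y | w != tstart Y})%type :=
  match insub w with Some w' => inr w' | None => inl (tend X) end.

Definition tprod (X Y : tree) : tree :=
  @Tree (tV X + {w : tV Y | w != tstart Y})%type (tE X + tE Y)%type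
    (fun e => match e with inl e => inl (tsrc e) | inr e => embY X (tsrc e) end)
    (fun e => match e with inl e => inl (ttgt e) | inr e => embY X (ttgt e) end)
    (fun e => match e with inl e => tlab e | inr e => tlab e end)
    (inl (tstart X)) (embY X (tend Y)).

Definition tplus (X : tree) : tree :=
  @Tree (tV X) (tE X) (@tsrc X) (@ttgt X) (@tlab X) (tstart X) (tstart X).

Definition tstar (X : tree) : tree :=
  @Tree (tV X) (tE X) (@tsrc X) (@ttgt X) (@tlab X) (tend X) (tend X).

Definition in_T1 (X : tree) : Prop := is_tree X /\ pruned X.

End Trees.

From Stdlib Require Import Relation_Operators Operators_Properties ZArith Lia Classical.
From Pilot Require Import Defs.
From mathcomp Require Import all_boot zify.
Set Implicit Arguments. Unset Strict Implicit. Unset Printing Implicit Defensive.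

(* Pruned trees with homomorphisms both ways are isomorphic, so [core_eq X Y]
   just says that there are homomorphisms [X -> Y] and [Y -> X]. A retract [P]
   of [Y] has homomorphisms both ways with [Y], hence [Y] may be replaced by [P]
   as a factor of a product, and it remains to compare [A X] with [A X^+].
   Every Sigma-tree has a height function increasing by one along each edge,
   and homomorphisms preserve heights. A homomorphism [A X -> B X] sends the
   gluing vertex to a vertex on a directed start-end path of [B X] of the same
   height as the gluing vertex of [B X] (comparing the images of the end vertex).
   Every directed path from the [B]-part into the [X]-part passes through the
   gluing vertex and heights strictly increase along directed paths, so the
   gluing vertex is fixed: the map is also a homomorphism [A X^+ -> B X^+].
   The case of [X^*] is symmetric. *)

Lemma iter_idempotent_power (T : finType) (u : T -> T) :
  exists2 m, 0 < m & forall x, iter m u (iter m u x) = iter m u x.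
Proof.
have [i [j [lt_ij eq_ij]]] : exists i j, i < j /\ forall x, iter i u x = iter j u x.
  pose F (k : 'I_#|{ffun T -> T}|.+1) := [ffun x => iter k u x].
  have /injectivePn[i [j ne_ij /ffunP eqF]] : ~~ injectiveb F.
    by apply/injectiveP => /leq_card; rewrite card_ord ltnn.
  have {}eqF x : iter i u x = iter j u x by have := eqF x; rewrite !ffunE.
  case: (ltngtP i j) => [lt|gt|eq]; first by exists i, j.
  - by exists j, i; split=> // x; rewrite eqF.
  - by rewrite (val_inj eq) eqxx in ne_ij.
pose p := j - i.
have period k x : i <= k -> iter (p + k) u x = iter k u x.
  move=> le_ik; have -> : p + k = (k - i) + j by lia.
  by rewrite iterD -eq_ij -iterD subnK.
have periods t k x : i <= k -> iter (t * p + k) u x = iter k u x.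
  move=> le_ik; elim: t => [|t IH]; first by rewrite mul0n.
  by rewrite mulSn -addnA period ?IH // (leq_trans le_ik) ?leq_addl.
exists (i.+1 * p) => [|x]; first by rewrite muln_gt0 subn_gt0.
by rewrite -iterD periods // (leq_trans (ltnW (ltnSn i))) ?leq_pmulr // subn_gt0.
Qed.

Lemma card_lt_predT (T : finType) (P : pred T) x : ~~ P x -> #|[pred y | P y]| < #|T|.
Proof.
move=> nPx; rewrite -(cardC [pred y | P y]) -addn1 leq_add2l.
by apply/card_gt0P; exists x; rewrite inE /= nPx.
Qed.

Section Homs.
Variable S : Type.
Implicit Types P Q X Y Z : tree S.

Definition hom_comp X Y Z (g : hom Y Z) (f : hom X Y) : hom X Z.
Proof.
refine (@Hom S X Z (fun v => hv g (hv f v)) (fun e => he g (he f e)) _ _ _ _ _).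
- by move=> e; rewrite !hom_src.
- by move=> e; rewrite !hom_tgt.
- by move=> e; rewrite !hom_lab.
- by rewrite !hom_start.
- by rewrite !hom_end.
Defined.

Definition hom_id X : hom X X :=
  @Hom S X X id id (fun _ => erefl) (fun _ => erefl) (fun _ => erefl) erefl erefl.

Definition hom_iter X (h : hom X X) (m : nat) : hom X X.
Proof.
refine (@Hom S X X (iter m (hv h)) (iter m (he h)) _ _ _ _ _).
- by move=> e; elim: m => //= m IH; rewrite hom_src IH.
- by move=> e; elim: m => //= m IH; rewrite hom_tgt IH.
- by move=> e; elim: m => //= m IH; rewrite hom_lab IH.
- by elim: m => //= m IH; rewrite IH hom_start.
- by elim: m => //= m IH; rewrite IH hom_end.
Defined.

Lemma pruned_endo_iter_id P (h : hom P P) : pruned P ->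
  exists2 m, 0 < m & (forall v, iter m (hv h) v = v) /\ (forall e, iter m (he h) e = e).
Proof.
move=> prP.
pose u (x : tV P + tE P) := match x with inl v => inl (hv h v) | inr e => inr (he h e) end.
have [m m_gt0 idem_u] := iter_idempotent_power u.
have iter_inl k v : iter k u (inl v) = inl (iter k (hv h) v) by elim: k => //= k ->.
have iter_inr k e : iter k u (inr e) = inr (iter k (he h) e) by elim: k => //= k ->.
have idem : Defs.idempotent (hom_iter h m).
  split=> [v|e] /=.
  - by have := idem_u (inl v); rewrite !iter_inl => -[].
  - by have := idem_u (inr e); rewrite !iter_inr => -[].
by exists m => //; apply: prP idem.
Qed.

(* A power of each composite is the identity, so [f] has left and right inverses. *)
Lemma pruned_homs_iso P Q : pruned P -> pruned Q -> hom P Q -> hom Q P -> iso P Q.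
Proof.
move=> prP prQ f g.
have [m m_gt0 [gfV gfE]] := pruned_endo_iter_id (hom_comp g f) prP.
have [n n_gt0 [fgV fgE]] := pruned_endo_iter_id (hom_comp f g) prQ.
have bij_can T1 T2 (k : T1 -> T2) l r : cancel k l -> cancel r k -> bijective k.
  by move=> kl rk; exists l => // y; rewrite -[y]rk kl.
exists f; split.
- apply: (@bij_can _ _ _ (fun y => iter m.-1 (hv (hom_comp g f)) (hv g y))
                        (fun y => hv g (iter n.-1 (hv (hom_comp f g)) y))).
  + by move=> x /=; rewrite -[in RHS](gfV x) -(prednK m_gt0) iterSr.
  + by move=> y /=; rewrite -[in RHS](fgV y) -(prednK n_gt0) iterS.
- apply: (@bij_can _ _ _ (fun y => iter m.-1 (he (hom_comp g f)) (he g y))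
                        (fun y => he g (iter n.-1 (he (hom_comp f g)) y))).
  + by move=> x /=; rewrite -[in RHS](gfE x) -(prednK m_gt0) iterSr.
  + by move=> y /=; rewrite -[in RHS](fgE y) -(prednK n_gt0) iterS.
Qed.

Lemma iso_hom_sym P Q : iso P Q -> inhabited (hom Q P).
Proof.
move=> [f [[gv fgv gfv] [ge fge gfe]]].
have inj_fv := can_inj fgv.
constructor; refine (@Hom S Q P gv ge _ _ _ _ _).
- by move=> e; apply: inj_fv; rewrite -hom_src !gfv gfe.
- by move=> e; apply: inj_fv; rewrite -hom_tgt !gfv gfe.
- by move=> e; rewrite -[in RHS](gfe e) hom_lab.
- by rewrite -(hom_start f) fgv.
- by rewrite -(hom_end f) fgv.
Qed.

Lemma retract_refl X : retract X X.
Proof. by exists (hom_id X), (hom_id X). Qed.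

Lemma retract_trans P Y X : retract P Y -> retract Y X -> retract P X.
Proof.
move=> [i1 [r1 [ri1V ri1E]]] [i2 [r2 [ri2V ri2E]]].
by exists (hom_comp i2 i1), (hom_comp r1 r2); split=> [v|e] /=; rewrite ?ri2V ?ri2E.
Qed.

End Homs.

Section FixedTree.
Variables (S : Type) (X : tree S) (f : hom X X).
Hypothesis idem_f : Defs.idempotent f.

Let fixV := {v : tV X | hv f v == v}.
Let fixE := {e : tE X | he f e == e}.
Let fixv v (p : hv f v == v) : fixV := exist (fun v => hv f v == v) v p.
Let fixe e (p : he f e == e) : fixE := exist (fun e => he f e == e) e p.

Lemma fix_src (e : fixE) : hv f (tsrc (val e)) == tsrc (val e).
Proof. by rewrite -hom_src (eqP (valP e)). Qed.
Lemma fix_tgt (e : fixE) : hv f (ttgt (val e)) == ttgt (val e).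
Proof. by rewrite -hom_tgt (eqP (valP e)). Qed.
Lemma fix_start : hv f (tstart X) == tstart X.
Proof. by rewrite hom_start. Qed.
Lemma fix_end : hv f (tend X) == tend X.
Proof. by rewrite hom_end. Qed.

Definition fixed_tree : tree S :=
  @Tree S fixV fixE (fun e => fixv (fix_src e)) (fun e => fixv (fix_tgt e))
    (fun e => tlab (val e)) (fixv fix_start) (fixv fix_end).

Lemma fixed_tree_retract : retract fixed_tree X.
Proof.
have fixV_img v : hv f (hv f v) == hv f v by rewrite idem_f.1.
have fixE_img e : he f (he f e) == he f e by rewrite idem_f.2.
pose proj v : tV fixed_tree := fixv (fixV_img v).
pose i := @Hom S fixed_tree X val val (fun _ => erefl) (fun _ => erefl) (fun _ => erefl)
  erefl erefl.
have r_src e : fixv (fix_src (fixe (fixE_img e))) = proj (tsrc e).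
  by apply: val_inj => /=; rewrite hom_src.
have r_tgt e : fixv (fix_tgt (fixe (fixE_img e))) = proj (ttgt e).
  by apply: val_inj => /=; rewrite hom_tgt.
have r_start : proj (tstart X) = fixv fix_start by apply: val_inj; rewrite /= hom_start.
have r_end : proj (tend X) = fixv fix_end by apply: val_inj; rewrite /= hom_end.
pose r := @Hom S X fixed_tree proj (fun e => fixe (fixE_img e)) r_src r_tgt
  (hom_lab f) r_start r_end.
by exists i, r; split=> x; apply: val_inj; apply/eqP; apply: (valP x).
Qed.

Lemma fixed_tree_size_lt : ~ ((forall v, hv f v = v) /\ (forall e, he f e = e)) ->
  #|tV fixed_tree| + #|tE fixed_tree| < #|tV X| + #|tE X|.
Proof.
move=> not_id; rewrite /= !card_sig.
have [[v fv_ne]|fixedV] := classic (exists v, hv f v <> v).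
  rewrite -addSn leq_add ?max_card //.
  by apply: (card_lt_predT (x := v)); apply/eqP.
have [[e fe_ne]|fixedE] := classic (exists e, he f e <> e).
  rewrite -addnS leq_add ?max_card //.
  by apply: (card_lt_predT (x := e)); apply/eqP.
case: not_id; split=> [v|e]; apply: NNPP => ne;
  [exact: fixedV (ex_intro _ v ne) | exact: fixedE (ex_intro _ e ne)].
Qed.

End FixedTree.

Lemma pruned_retract_exists (S : Type) (X : tree S) : exists P, pruned P /\ retract P X.
Proof.
move: {2}(#|tV X| + #|tE X|) (leqnn (#|tV X| + #|tE X|)) => n.
elim: n X => [|n IH] X size_X.
  have : 0 < #|tV X| by apply/card_gt0P; exists (tstart X).
  lia.
have [prX|not_prX] := classic (pruned X); first by exists X; split; last exact: retract_refl.
have [g idem_g not_id] : exists2 g : hom X X, Defs.idempotent g &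
    ~ ((forall v, hv g v = v) /\ (forall e, he g e = e)).
  by apply: NNPP => no_g; apply: not_prX => g idem_g; apply: NNPP => not_id; apply: no_g; exists g.
have [P [prP retrP]] := IH (fixed_tree g) (leq_trans (fixed_tree_size_lt not_id) size_X).
by exists P; split=> //; apply: retract_trans retrP (fixed_tree_retract idem_g).
Qed.

Lemma core_eq_homs (S : Type) (X Y : tree S) :
  core_eq X Y <-> inhabited (hom X Y) /\ inhabited (hom Y X).
Proof.
split.
- move=> [P [Q [_ [iP [rP _]] _ [iQ [rQ _]] isoPQ]]].
  have [g] := iso_hom_sym isoPQ; case: isoPQ => f _.
  split; constructor.
  + exact: hom_comp iQ (hom_comp f rP).
  + exact: hom_comp iP (hom_comp g rQ).
- move=> [[h] [k]].
  have [P [prP [iP [rP retrP]]]] := pruned_retract_exists X.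
  have [Q [prQ [iQ [rQ retrQ]]]] := pruned_retract_exists Y.
  exists P, Q; split=> //; [by exists iP, rP | by exists iQ, rQ |].
  apply: pruned_homs_iso => //.
  + exact: hom_comp rQ (hom_comp h iP).
  + exact: hom_comp rP (hom_comp k iQ).
Qed.

Section Products.
Variable S : Type.
Implicit Types A B P X Y : tree S.

Lemma embYP A Y (y : tV Y) :
  (y = tstart Y /\ embY A y = inl (tend A)) \/
  (exists w : {w : tV Y | w != tstart Y}, val w = y /\ embY A y = inr w).
Proof.
rewrite /embY; case: insubP => [w _ <-|]; first by right; exists w.
by rewrite negbK => /eqP ->; left.
Qed.

Lemma embY_start A Y : embY A (tstart Y) = inl (tend A).
Proof. by rewrite /embY insubN ?negbK. Qed.

Lemma embY_val A Y (w : {w : tV Y | w != tstart Y}) : embY A (val w) = inr w.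
Proof. by rewrite /embY valK. Qed.

Definition tprod_inl A Y : hom A (tprod A (tplus Y)) :=
  @Hom S A (tprod A (tplus Y)) inl inl (fun _ => erefl) (fun _ => erefl) (fun _ => erefl)
    erefl (esym (embY_start A Y)).

Definition tprod_inr X B : hom B (tprod (tstar X) B) :=
  @Hom S B (tprod (tstar X) B) (@embY S (tstar X) B) inr (fun _ => erefl) (fun _ => erefl)
    (fun _ => erefl) (embY_start (tstar X) B) erefl.

(* A homomorphism [A -> B Y^+] is a map of [A] into [B Y] sending the end of
   [A] to the gluing vertex; it extends by the identity on [Y] to [A Y -> B Y].
   Dually for [B -> A^* Y]. *)
Section Extend.
Variables A B Y : tree S.

Section Left.
Variable h : hom A (tprod B (tplus Y)).

Definition tprod_homl_v (x : tV (tprod A Y)) : tV (tprod B Y) :=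
  match x with inl a => hv h a | inr w => inr w end.

Lemma tprod_homl_v_embY y : tprod_homl_v (embY A y) = embY B y.
Proof.
have [[-> ->]|[w [<- ->]]] := embYP A y; last by rewrite embY_val.
by rewrite /= (hom_end h) /= !embY_start.
Qed.

Definition tprod_homl : hom (tprod A Y) (tprod B Y).
Proof.
refine (@Hom S (tprod A Y) (tprod B Y) tprod_homl_v
  (fun e => match e with inl e => he h e | inr e => inr e end) _ _ _ _ _).
- by case=> e; [exact: hom_src h e | rewrite /= tprod_homl_v_embY].
- by case=> e; [exact: hom_tgt h e | rewrite /= tprod_homl_v_embY].
- by case=> e; [exact: hom_lab h e |].
- exact: hom_start h.
- exact: tprod_homl_v_embY.
Defined.
End Left.

Section Right.
Variable h : hom B (tprod (tstar A) Y).

Definition tprod_homr_v (x : tV (tprod A B)) : tV (tprod A Y) :=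
  match x with inl a => inl a | inr w => hv h (val w) end.

Lemma tprod_homr_v_embY b : tprod_homr_v (embY A b) = hv h b.
Proof. by have [[-> ->]|[w [<- ->]]] := embYP A b; rewrite ?(hom_start h). Qed.

Definition tprod_homr : hom (tprod A B) (tprod A Y).
Proof.
refine (@Hom S (tprod A B) (tprod A Y) tprod_homr_v
  (fun e => match e with inl e => inl e | inr e => he h e end) _ _ _ _ _).
- by case=> e; [| rewrite /= tprod_homr_v_embY; exact: hom_src h e].
- by case=> e; [| rewrite /= tprod_homr_v_embY; exact: hom_tgt h e].
- by case=> e; [| exact: hom_lab h e].
- by [].
- by rewrite /= tprod_homr_v_embY (hom_end h).
Defined.
End Right.
End Extend.

Definition tprod_map_l A B Y (f : hom A B) : hom (tprod A Y) (tprod B Y) :=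
  tprod_homl (hom_comp (tprod_inl B Y) f).

Definition tprod_map_r A P Y (f : hom P Y) : hom (tprod A P) (tprod A Y) :=
  tprod_homr (hom_comp (tprod_inr A Y) f).

Lemma tprodl_hom_iff A B P Y : hom P Y -> hom Y P ->
  inhabited (hom (tprod Y A) (tprod Y B)) <-> inhabited (hom (tprod P A) (tprod P B)).
Proof.
move=> i r; split=> -[g]; constructor.
- exact: hom_comp (tprod_map_l B r) (hom_comp g (tprod_map_l A i)).
- exact: hom_comp (tprod_map_l B i) (hom_comp g (tprod_map_l A r)).
Qed.

Lemma tprodr_hom_iff A B P Y : hom P Y -> hom Y P ->
  inhabited (hom (tprod A Y) (tprod B Y)) <-> inhabited (hom (tprod A P) (tprod B P)).
Proof.
move=> i r; split=> -[g]; constructor.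
- exact: hom_comp (tprod_map_r B r) (hom_comp g (tprod_map_r A i)).
- exact: hom_comp (tprod_map_r B i) (hom_comp g (tprod_map_r A r)).
Qed.

End Products.

Lemma clos_rt_map (X Y : Type) (R : X -> X -> Prop) (R' : Y -> Y -> Prop) (m : X -> Y) :
  (forall u v, R u v -> R' (m u) (m v)) ->
  forall x y, clos_refl_trans X R x y -> clos_refl_trans Y R' (m x) (m y).
Proof.
move=> mR x y; elim=> [u v /mR|u|u v w _ IHuv _ IHvw]; first exact: rt_step.
- exact: rt_refl.
- exact: rt_trans IHuv IHvw.
Qed.

Definition connected (S : Type) (T : tree S) : Prop :=
  forall v, @clos_refl_trans _ (@uadj S T) (tstart T) v.

Definition dreach (S : Type) (T : tree S) (u v : tV T) : Prop :=
  @clos_refl_trans _ (@dadj S T) u v.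

Definition is_height (S : Type) (T : tree S) (phi : tV T -> Z) : Prop :=
  forall e, phi (ttgt e) = (phi (tsrc e) + 1)%Z.

Definition rooted_height (S : Type) (T : tree S) (phi : tV T -> Z) : Prop :=
  is_height phi /\ phi (tstart T) = 0%Z.


Section Height.
Variables (S : Type) (T : tree S).
Hypothesis card_tE : #|tE T|.+1 = #|tV T|.
Hypothesis conn_T : connected T.
Local Notation s := (tstart T).

Definition joins (e : tE T) (u v : tV T) : bool :=
  (tsrc e == u) && (ttgt e == v) || (tsrc e == v) && (ttgt e == u).

Definition uadjb (u v : tV T) : bool := [exists e, joins e u v].

Fixpoint walkb (n : nat) (v : tV T) : bool :=
  if n is n'.+1 then [exists u, walkb n' u && uadjb u v] else v == s.

Lemma walkb_exists v : exists n, walkb n v.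
Proof.
have := clos_rt_rtn1 _ _ _ _ (conn_T v).
elim=> [|u w [e uw] _ [n walk_u]]; first by exists 0 => /=.
exists n.+1; apply/existsP; exists u; apply/andP; split; first exact: walk_u.
apply/existsP; exists e.
by rewrite /joins; case: uw => -[-> ->]; rewrite !eqxx ?orbT.
Qed.

Definition depth v := ex_minn (walkb_exists v).

Lemma walkb_depth v : walkb (depth v) v.
Proof. by rewrite /depth; case: ex_minnP. Qed.

Lemma depth_min v n : walkb n v -> depth v <= n.
Proof. by rewrite /depth; case: ex_minnP => m _; apply. Qed.

Lemma depth_start : depth s = 0.
Proof. by apply/eqP; rewrite -leqn0; apply: depth_min => /=. Qed.

Definition parent v : tV T := odflt v [pick u | ((depth u).+1 == depth v) && uadjb u v].

Lemma parentP v : v != s -> (depth (parent v)).+1 = depth v /\ uadjb (parent v) v.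
Proof.
move=> v_ns; rewrite /parent; case: pickP => [u /andP[/eqP -> ->] // | no_parent].
have := walkb_depth v; case dv: (depth v) => [|m] /=.
  by move/eqP=> v_s; rewrite v_s eqxx in v_ns.
case/existsP=> u /andP[walk_u adj_uv].
have le_vu : depth v <= (depth u).+1.
  by apply: depth_min; apply/existsP; exists u; apply/andP; split=> //; apply: walkb_depth.
have := no_parent u; rewrite adj_uv andbT dv eqSS eqn_leq depth_min //=.
by rewrite -ltnS -dv le_vu.
Qed.

Definition parent_edge v : option (tE T) := [pick e | joins e (parent v) v].

Lemma parent_edgeP v : v != s ->
  exists e, parent_edge v = Some e /\ joins e (parent v) v.
Proof.
move=> v_ns; have [_ /existsP[e join_e]] := parentP v_ns.
by rewrite /parent_edge; case: pickP => [e' ?|no_e]; [exists e' | rewrite no_e in join_e].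
Qed.

Lemma parent_edge_inj : {in [set~ s] &, injective parent_edge}.
Proof.
move=> v w; rewrite !in_setC1 => v_ns w_ns.
have [e [-> join_v]] := parent_edgeP v_ns; have [e' [-> join_w]] := parent_edgeP w_ns.
case=> eq_e; subst e'.
have [dv _] := parentP v_ns; have [dw _] := parentP w_ns.
have no_swap : parent v = w -> parent w = v -> v = w.
  by move=> pv pw; move: dv dw; rewrite pv pw; lia.
move: join_v join_w; rewrite /joins.
case/orP=> /andP[/eqP s1 /eqP t1]; case/orP=> /andP[/eqP s2 /eqP t2].
- by rewrite -t1 -t2.
- by apply: no_swap; [rewrite -s1 s2 | rewrite -t2 t1].
- by apply: no_swap; [rewrite -t1 t2 | rewrite -s2 s1].
- by rewrite -s1 -s2.
Qed.

(* [parent_edge] injects the [#|tV T| - 1 = #|tE T|] non-start vertices into the edges. *)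
Lemma parent_edge_surj e : exists2 v, v != s & parent_edge v = Some e.
Proof.
have card_img : #|[set parent_edge v | v in [set~ s]]| = #|[set Some e | e : tE T]|.
  rewrite (card_in_imset parent_edge_inj) (card_imset _ (@Some_inj _)).
  by rewrite cardsC1 -card_tE.
have sub_img : [set parent_edge v | v in [set~ s]] \subset [set Some e | e : tE T].
  apply/subsetP=> o /imsetP[v]; rewrite in_setC1 => v_ns ->.
  by have [e' [-> _]] := parent_edgeP v_ns; apply: imset_f.
have : Some e \in [set parent_edge v | v in [set~ s]].
  by rewrite (subset_cardP card_img sub_img) imset_f.
by case/imsetP=> v; rewrite in_setC1 => v_ns pe_v; exists v.
Qed.

Fixpoint height_rec (n : nat) (v : tV T) : Z :=
  if n is n'.+1 then
    if parent_edge v is Some e then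
      (height_rec n' (parent v) + if ttgt e == v then 1 else -1)%Z
    else 0%Z
  else 0%Z.

Definition height v := height_rec (depth v) v.

Lemma height_start : height s = 0%Z.
Proof. by rewrite /height depth_start. Qed.

Lemma height_parent v e : v != s -> parent_edge v = Some e ->
  height v = (height (parent v) + if ttgt e == v then 1 else -1)%Z.
Proof. by move=> v_ns pe_v; rewrite /height -(parentP v_ns).1 /= pe_v. Qed.

Lemma is_height_height : is_height height.
Proof.
move=> e; have [v v_ns pe_v] := parent_edge_surj e.
have [e' [pe_v' join]] := parent_edgeP v_ns.
rewrite pe_v in pe_v'; case: pe_v' => <-{e'} in join.
have [dv _] := parentP v_ns.
case/orP: join => /andP[/eqP src_e /eqP tgt_e].
  by rewrite src_e tgt_e (height_parent v_ns pe_v) tgt_e eqxx.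
rewrite src_e tgt_e (height_parent v_ns pe_v) tgt_e.
have -> : (parent v == v) = false by apply/eqP => pv; rewrite pv in dv; lia.
lia.
Qed.

End Height.

Lemma is_tree_height (S : Type) (T : tree S) : is_tree T -> exists phi, @rooted_height S T phi.
Proof.
case=> card_tE conn_T _.
by exists (height conn_T); split; [exact: is_height_height | exact: height_start].
Qed.



Section Gluing.
Variable S : Type.
Implicit Types A B C D T : tree S.

Lemma hom_height T1 T2 (f : hom T1 T2) (phi1 : tV T1 -> Z) (phi2 : tV T2 -> Z) :
  connected T1 -> is_height phi1 -> is_height phi2 ->
  phi2 (hv f (tstart T1)) = phi1 (tstart T1) -> forall v, phi2 (hv f v) = phi1 v.
Proof.
move=> conn_T1 h1 h2 f_start v; have := clos_rt_rtn1 _ _ _ _ (conn_T1 v).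
elim=> // u w [e [[<- <-]|[<- <-]]] _ IH.
- by rewrite -hom_tgt h2 hom_src IH h1.
- by move: (h2 (he f e)) (h1 e); rewrite hom_tgt hom_src IH; lia.
Qed.

Lemma dreach_height T (phi : tV T -> Z) u v : is_height phi -> dreach u v ->
  u = v \/ (phi u < phi v)%Z.
Proof.
move=> h; elim=> [x y [e [<- <-]]|x|x y z _ [->|lt_xy] _ [<-|lt_yz]].
- by right; rewrite h; lia.
- by left.
- by left.
- by right.
- by right.
- by right; lia.
Qed.

Lemma hom_dreach T1 T2 (f : hom T1 T2) u v : dreach u v -> dreach (hv f u) (hv f v).
Proof.
apply: clos_rt_map => x y [e [<- <-]].
by exists (he f e); rewrite hom_src hom_tgt.
Qed.

Section TprodHeight.
Variables (A C : tree S) (phiA : tV A -> Z) (phiC : tV C -> Z).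
Hypotheses (hA : is_height phiA) (hC : is_height phiC) (phiC_start : phiC (tstart C) = 0%Z).

Definition tprod_height (x : tV (tprod A C)) : Z :=
  match x with inl a => phiA a | inr w => (phiA (tend A) + phiC (val w))%Z end.

Lemma tprod_height_embY y : tprod_height (embY A y) = (phiA (tend A) + phiC y)%Z.
Proof. by have [[-> ->]|[w [<- ->]]] := embYP A y; rewrite //= phiC_start Z.add_0_r. Qed.

Lemma is_height_tprod : is_height tprod_height.
Proof. by case=> e /=; rewrite ?hA // !tprod_height_embY hC Z.add_assoc. Qed.

End TprodHeight.

Lemma connected_tprod A C : connected A -> connected C -> connected (tprod A C).
Proof.
move=> conn_A conn_C.
have inl_uadj : forall u v, uadj u v -> @uadj S (tprod A C) (inl u) (inl v).
  by move=> u v [e uv]; exists (inl e); case: uv => -[<- <-]; [left|right].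
case=> [a|w]; first exact: clos_rt_map inl_uadj _ _ (conn_A a).
apply: (rt_trans _ _ _ (inl (tend A))); first exact: clos_rt_map inl_uadj _ _ (conn_A (tend A)).
rewrite -(embY_start A C) -embY_val.
apply: clos_rt_map (conn_C (val w)) => u v [e uv].
by exists (inr e); case: uv => -[<- <-]; [left|right].
Qed.

Lemma dreach_tprod_l A C :
  dreach (tstart A) (tend A) -> dreach (tstart (tprod A C)) (inl (tend A) : tV (tprod A C)).
Proof. by apply: clos_rt_map => u v [e [<- <-]]; exists (inl e). Qed.

Lemma dreach_tprod_r A C :
  dreach (tstart C) (tend C) -> dreach (inl (tend A) : tV (tprod A C)) (tend (tprod A C)).
Proof.
rewrite /= -(embY_start A C).
by apply: clos_rt_map => u v [e [<- <-]]; exists (inr e).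
Qed.

Lemma tprod_edge_cross B D (e : tE (tprod B D)) a w :
  tsrc e = inl a -> ttgt e = inr w -> a = tend B.
Proof.
case: e => [e|e] //=.
by have [[_ ->]|[w' [_ ->]]] := embYP B (tsrc e); case.
Qed.

Lemma dreach_tprod_cut B D (a : tV B) (w : {w : tV D | w != tstart D}) :
  dreach (inl a : tV (tprod B D)) (inr w) ->
  dreach (inl a : tV (tprod B D)) (inl (tend B)) /\ dreach (inl (tend B) : tV (tprod B D)) (inr w).
Proof.
move=> path_aw.
suff cut x y : clos_refl_trans_1n _ (@dadj S (tprod B D)) x y ->
    forall a w, x = inl a -> y = inr w ->
    dreach x (inl (tend B)) /\ dreach (inl (tend B) : tV (tprod B D)) y.
  exact: cut (clos_rt_rt1n _ _ _ _ path_aw) a w erefl erefl.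
elim=> {a w path_aw} [x0 a w -> //|x0 u y0 step_xu path_uy IH a w x0_a y0_w].
rewrite {}x0_a in step_xu *; case: step_xu => e [src_e tgt_e].
case: u => [b|w'] in tgt_e path_uy IH *.
  have [p1 p2] := IH b w erefl y0_w; split=> //.
  by apply: rt_trans p1; apply: rt_step; exists e.
have a_end := tprod_edge_cross src_e tgt_e; subst a.
split; first exact: rt_refl.
apply: rt_trans (clos_rt1n_rt _ _ _ _ path_uy).
by apply: rt_step; exists e.
Qed.

End Gluing.

Section GluingVertex.
Variables (S : Type) (A B C D : tree S).
Variables (phiA : tV A -> Z) (phiB : tV B -> Z) (phiC : tV C -> Z) (phiD : tV D -> Z).
Hypotheses (hA : rooted_height phiA) (hB : rooted_height phiB).
Hypotheses (hC : rooted_height phiC) (hD : rooted_height phiD).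
Hypotheses (conn_A : connected A) (conn_C : connected C).
Hypotheses (path_A : dreach (tstart A) (tend A)) (path_C : dreach (tstart C) (tend C)).

Lemma hom_tprod_height (f : hom (tprod A C) (tprod B D)) v :
  tprod_height phiB phiD (hv f v) = tprod_height phiA phiC v.
Proof.
apply: hom_height; rewrite ?hom_start /= ?hA.2 ?hB.2 //.
- exact: connected_tprod.
- exact: is_height_tprod hA.1 hC.1 hC.2.
- exact: is_height_tprod hB.1 hD.1 hD.2.
Qed.

Lemma hom_tprod_glue (f : hom (tprod A C) (tprod B D)) :
  phiA (tend A) = phiB (tend B) -> hv f (inl (tend A)) = inl (tend B).
Proof.
move=> ends.
have height_g := hom_tprod_height f (inl (tend A)); rewrite /= ends in height_g.
have from_start := hom_dreach f (dreach_tprod_l C path_A); rewrite hom_start in from_start.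
have to_end := hom_dreach f (dreach_tprod_r A path_C); rewrite hom_end /= in to_end.
have hBD := is_height_tprod hB.1 hD.1 hD.2.
case: (hv f (inl (tend A))) => [b|w] in height_g from_start to_end *.
- have path_b : dreach (inl b : tV (tprod B D)) (inl (tend B)).
    have [[_ end_D]|[w [_ end_D]]] := embYP B (tend D); rewrite end_D in to_end => //.
    exact: (dreach_tprod_cut to_end).1.
  have [->//|lt_bg] := dreach_height hBD path_b; exfalso; move: height_g lt_bg => /=; lia.
- have [_ path_w] := dreach_tprod_cut from_start.
  have [//|lt_gw] := dreach_height hBD path_w; exfalso; move: height_g lt_gw => /=; lia.
Qed.

End GluingVertex.

Section PlusStar.
Variables (S : Type) (A B X : tree S).
Hypotheses (tree_A : is_tree A) (tree_B : is_tree B) (tree_X : is_tree X).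

(* [A X] and [A X^+] differ only in the end vertex, which in [A X^+] is the
   gluing vertex. *)
Definition tprod_hom_plus (f : hom (tprod A X) (tprod B X))
    (f_glue : hv f (inl (tend A)) = inl (tend B)) :
  hom (tprod A (tplus X)) (tprod B (tplus X)).
Proof.
refine (@Hom S (tprod A (tplus X)) (tprod B (tplus X)) (hv f) (he f)
  (hom_src f) (hom_tgt f) (hom_lab f) (hom_start f) _).
by rewrite /= !embY_start.
Defined.

Definition tprod_hom_star (f : hom (tprod X A) (tprod X B))
    (f_glue : hv f (inl (tend X)) = inl (tend X)) :
  hom (tprod (tstar X) A) (tprod (tstar X) B) :=
  @Hom S (tprod (tstar X) A) (tprod (tstar X) B) (hv f) (he f)
    (hom_src f) (hom_tgt f) (hom_lab f) f_glue (hom_end f).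

Lemma tprod_plus_hom_iff :
  inhabited (hom (tprod A X) (tprod B X)) <->
  inhabited (hom (tprod A (tplus X)) (tprod B (tplus X))).
Proof.
split=> -[f]; last by constructor; exact: tprod_homl (hom_comp f (tprod_inl A X)).
have [phiA hA] := is_tree_height tree_A.
have [phiB hB] := is_tree_height tree_B.
have [phiX hX] := is_tree_height tree_X.
case: tree_A tree_X => _ conn_A path_A [_ conn_X path_X].
have ends : phiA (tend A) = phiB (tend B).
  have := hom_tprod_height hA hB hX hX conn_A conn_X f (tend (tprod A X)).
  by rewrite hom_end /= !tprod_height_embY ?hX.2 //; lia.
constructor; apply: (tprod_hom_plus (f := f)).
exact: (hom_tprod_glue hA hB hX hX conn_A conn_X path_A path_X f ends).
Qed.

Lemma tprod_star_hom_iff :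
  inhabited (hom (tprod X A) (tprod X B)) <->
  inhabited (hom (tprod (tstar X) A) (tprod (tstar X) B)).
Proof.
split=> -[f]; last by constructor; exact: tprod_homr (hom_comp f (tprod_inr X A)).
have [phiA hA] := is_tree_height tree_A.
have [phiB hB] := is_tree_height tree_B.
have [phiX hX] := is_tree_height tree_X.
case: tree_A tree_X => _ conn_A path_A [_ conn_X path_X].
constructor; apply: (tprod_hom_star (f := f)).
exact: (hom_tprod_glue hX hX hA hB conn_X conn_A path_X path_A f).
Qed.

End PlusStar.

Theorem proposition4p9 (S : Type) (A B X : tree S) :
  in_T1 A -> in_T1 B -> in_T1 X ->
  (forall P : tree S, pruned P -> retract P (tplus X) ->
     (core_eq (tprod A X) (tprod B X) <-> core_eq (tprod A P) (tprod B P))) /\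
  (forall Q : tree S, pruned Q -> retract Q (tstar X) ->
     (core_eq (tprod X A) (tprod X B) <-> core_eq (tprod Q A) (tprod Q B))).
Proof.
move=> [tree_A _] [tree_B _] [tree_X _]; split.
- move=> P _ [i [r _]]; rewrite !core_eq_homs.
  rewrite (tprod_plus_hom_iff tree_A tree_B tree_X) (tprod_plus_hom_iff tree_B tree_A tree_X).
  by rewrite !(tprodr_hom_iff _ _ i r).
- move=> Q _ [i [r _]]; rewrite !core_eq_homs.
  rewrite (tprod_star_hom_iff tree_A tree_B tree_X) (tprod_star_hom_iff tree_B tree_A tree_X).
  by rewrite !(tprodl_hom_iff _ _ i r).
Qed.
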